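(* Let $|\psi\rangle$ be a pure three-qubit state. If $\mathcal C_{ij}^2>\frac49$ holds for two distinct pairs $\{i,j\}\subset\{A,B,C\}$, then steering is non-monogamous for $|\psi\rangle$: the corresponding two reduced states both satisfy $S_{ij}>1$, i.e. both violate the three-settings CJWR linear steering inequality.
   Context: For a two-qubit state $\rho$ let $t_{kl}=\mathrm{Tr}[\rho\,\sigma_k\otimes\sigma_l]$ ($\sigma_k$ Pauli matrices) and $S(\rho)=\sum_{k,l=1}^3 t_{kl}^2$; $\rho_{ij}$ is the reduced state of qubits $i,j$ and $S_{ij}=S(\rho_{ij})$. The three-settings CJWR linear steering inequality has maximal value $\sqrt{S(\rho)}$ over settings, so it is violated iff $S(\rho)>1$. $\mathcal C_{ij}$ is the Wootters concurrence of $\rho_{ij}$: $\mathcal C(\rho)=\max\{0,\lambda_1-\lambda_2-\lambda_3-\lambda_4\}$, with $\lambda_1\ge\dots\ge\lambda_4$ the square roots of the eigenvalues of $\rho(\sigma_2\otimes\sigma_2)\rho^*(\sigma_2\otimes\sigma_2)$. *)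

From HB Require Import structures.
From mathcomp Require Import all_boot all_order all_algebra.
From mathcomp Require Import complex mxtens.
Set Implicit Arguments. Unset Strict Implicit. Unset Printing Implicit Defensive.
Import Order.TTheory GRing.Theory Num.Theory.
Local Open Scope ring_scope.
Local Open Scope complex_scope.

Section Defs.
Variable R : rcfType.
Local Notation C := R[i].

(* Pauli matrices sigma_1, sigma_2, sigma_3, indexed by k : 'I_3 (k = 0,1,2). *)
Definition pauli (k : 'I_3) : 'M[C]_2 :=
  \matrix_(a < 2, b < 2)
    if val k == 0%N then (if val a == val b then 0 else 1)
    else if val k == 1%N then
      (if val a == val b then 0 else if val a == 0%N then - 'i else 'i)
    else (if val a == val b then (if val a == 0%N then 1 else -1) else 0).

(* A three-qubit pure state: amplitudes psi a b c = <a b c|psi>. *)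
Definition qstate3 := 'I_2 -> 'I_2 -> 'I_2 -> C.

Definition normalized (psi : qstate3) : Prop :=
  \sum_(a < 2) \sum_(b < 2) \sum_(c < 2) psi a b c * (psi a b c)^* = 1.

Definition amp (psi : qstate3) (k : 'I_3) (z x y : 'I_2) : C :=
  if val k == 0%N then psi z x y
  else if val k == 1%N then psi x z y
  else psi x y z.

(* Two-qubit reduced state of psi obtained by tracing out qubit k
   (k = 0: rho_BC, k = 1: rho_AC, k = 2: rho_AB), as a 4x4 matrix in the
   product basis |x y>, index mxtens_index (x, y). *)
Definition reduced (psi : qstate3) (k : 'I_3) : 'M[C]_(2 * 2) :=
  \matrix_(i, j)
    \sum_(z < 2) amp psi k z (mxtens_unindex i).1 (mxtens_unindex i).2
                 * (amp psi k z (mxtens_unindex j).1 (mxtens_unindex j).2)^*.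

Definition corr (rho : 'M[C]_(2 * 2)) (k l : 'I_3) : C :=
  \tr (rho *m (pauli k *t pauli l)).

Definition Ssum (rho : 'M[C]_(2 * 2)) : C :=
  \sum_(k < 3) \sum_(l < 3) corr rho k l ^+ 2.

Definition wootters_mx (rho : 'M[C]_(2 * 2)) : 'M[C]_(2 * 2) :=
  let Y := pauli 1 *t pauli 1 in rho *m Y *m map_mx conjc rho *m Y.

(* c is the Wootters concurrence of rho: lam 0 >= lam 1 >= lam 2 >= lam 3 >= 0
   are the square roots of the eigenvalues (with multiplicity, i.e. the
   roots of the characteristic polynomial) of wootters_mx rho, and
   c = max(0, lam0 - lam1 - lam2 - lam3). *)
Definition is_concurrence (rho : 'M[C]_(2 * 2)) (c : R) : Prop :=
  exists lam : 'I_4 -> R,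
    (forall i, 0 <= lam i) /\
    (forall i j : 'I_4, (i <= j)%N -> lam j <= lam i) /\
    char_poly (wootters_mx rho) = \prod_(i < 4) ('X - ((lam i ^+ 2)%:C)%:P) /\
    c = Num.max 0 (lam 0 - lam 1 - lam 2 - lam 3).

End Defs.

From HB Require Import structures.
From mathcomp Require Import all_boot all_order all_algebra.
From mathcomp Require Import complex mxtens.
From mathcomp Require Import ring lra.
Set Implicit Arguments. Unset Strict Implicit. Unset Printing Implicit Defensive.
Import Order.TTheory GRing.Theory Num.Theory.
Local Open Scope ring_scope.
Local Open Scope complex_scope.

(* For a pure three-qubit state, rho = V V^+ with V the 4 x 2 matrix of
   amplitudes, so rho has rank two. With Y = sigma_2 (x) sigma_2 and q the
   determinant of the Gram matrix V^+ V (the one-qubit reduced state of the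
   traced-out qubit), the Pauli completeness relations give
     S(rho) = 2 Tr rho^2 + 2 Tr (rho Y rho^T Y) - (Tr rho)^2 = 1 - 4 q + 2 Tr W,
   W the Wootters matrix, and Tr W = sum_i lam_i^2 >= lam_0^2 >= C^2.
   Since W = V (V^+ Y conj V V^T Y), its eigenvalue mu = lam_0^2 is an
   eigenvalue of conj G G for the symmetric G = V^T Y V; take an eigenvector y.
   Then z = y conj G has |z|^2 = mu |y|^2, and u = z V^T, w = conj y V^T satisfy
   u Y w^T = mu |y|^2. The normalised values a = |u|^2 / |z|^2 and
   b = |w|^2 / |y|^2 of the quadratic form of the density matrix V^T conj V
   satisfy a (1 - a), b (1 - b) >= q, and Cauchy-Schwarz gives mu <= a b.
   These force 2 q < mu once mu > 4/9, hence S(rho) > 1. *)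

Section SmallSums.
Variable V : nmodType.

Lemma sum_ord2 (F : 'I_2 -> V) : \sum_i F i = F 0 + F 1.
Proof. by rewrite big_ord_recr big_ord1; congr (F _ + F _); apply: val_inj. Qed.

Lemma sum_ord3 (F : 'I_3 -> V) : \sum_i F i = F 0 + F 1 + F 2%:R.
Proof.
by rewrite !big_ord_recr big_ord0 /= add0r; congr (F _ + F _ + F _); apply: val_inj.
Qed.

(* Concrete ordinals rather than the ring numerals of 'I_(2 * 2) keep the
   large expansions below cheap. *)
Lemma sum_ord4 (F : 'I_(2 * 2) -> V) : \sum_i F i =
  F (Ordinal (isT : 0 < 2 * 2)%N) + F (Ordinal (isT : 1 < 2 * 2)%N)
  + F (Ordinal (isT : 2 < 2 * 2)%N) + F (Ordinal (isT : 3 < 2 * 2)%N).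
Proof.
by rewrite !big_ord_recr big_ord0 /= add0r; congr (F _ + F _ + F _ + F _); apply: val_inj.
Qed.

Lemma sum_mxtens_index m n (F : 'I_(m * n) -> V) :
  \sum_i F i = \sum_(a < m) \sum_(b < n) F (mxtens_index (a, b)).
Proof.
rewrite (reindex (@mxtens_index m n)) /=; last first.
  by exists (@mxtens_unindex m n) => ? _; rewrite (mxtens_indexK, mxtens_unindexK).
by rewrite pair_big; apply: eq_bigr => -[a b].
Qed.

End SmallSums.

Section ComplexSquaredNorm.
Variable R : rcfType.
Local Notation C := R[i].

(* Locked, so that rewriting with [real_complexD] and the like never opens it. *)
Definition normc2 (z : C) : R := locked (complex.Re z ^+ 2 + complex.Im z ^+ 2).

(* Instances of [rmorphD] etc. stated with the plain functions: the generic
   lemmas leave the bundled morphism in the goal, which [mulcJ_normc2] and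
   [conjcK] do not match. *)
Lemma real_complex0 : (0 : R)%:C = 0 :> C. Proof. exact: rmorph0. Qed.
Lemma real_complex1 : (1 : R)%:C = 1 :> C. Proof. exact: rmorph1. Qed.
Lemma real_complexn n : (n%:R : R)%:C = n%:R :> C. Proof. exact: rmorph_nat. Qed.
Lemma real_complexD (x y : R) : (x + y)%:C = x%:C + y%:C :> C. Proof. exact: rmorphD. Qed.
Lemma real_complexB (x y : R) : (x - y)%:C = x%:C - y%:C :> C. Proof. exact: rmorphB. Qed.
Lemma real_complexN (x : R) : (- x)%:C = - x%:C :> C. Proof. exact: rmorphN. Qed.
Lemma real_complexM (x y : R) : (x * y)%:C = x%:C * y%:C :> C. Proof. exact: rmorphM. Qed.
Lemma real_complexX (x : R) n : (x ^+ n)%:C = x%:C ^+ n :> C. Proof. exact: rmorphXn. Qed.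
Lemma real_complex_sum I r (P : pred I) (F : I -> R) :
  (\sum_(i <- r | P i) F i)%:C = \sum_(i <- r | P i) (F i)%:C :> C.
Proof. exact: rmorph_sum. Qed.

Lemma conjcB (z w : C) : conjc (z - w) = conjc z - conjc w. Proof. exact: rmorphB. Qed.
Lemma conjcD (z w : C) : conjc (z + w) = conjc z + conjc w. Proof. exact: rmorphD. Qed.
Lemma conjcN (z : C) : conjc (- z) = - conjc z. Proof. exact: rmorphN. Qed.
Lemma conjcM (z w : C) : conjc (z * w) = conjc z * conjc w. Proof. exact: rmorphM. Qed.
Lemma conjc_sum I r (P : pred I) (F : I -> C) :
  conjc (\sum_(i <- r | P i) F i) = \sum_(i <- r | P i) conjc (F i).
Proof. exact: rmorph_sum. Qed.

Definition real_complexE := (real_complex0, real_complex1, real_complexn,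
  real_complexD, real_complexB, real_complexN, real_complexM, real_complexX).
Definition conjcE := (conjcD, conjcB, conjcN, conjcM, conjc_sum, conjcK).

Lemma mulcJ_normc2 (z : C) : z * conjc z = (normc2 z)%:C.
Proof.
case: z => a b; apply/eqP; rewrite eq_complex /normc2 -lock /=.
by apply/andP; split; apply/eqP; ring.
Qed.

Lemma normc2_ge0 (z : C) : 0 <= normc2 z.
Proof. by rewrite /normc2 -lock; nra. Qed.

Lemma normc2_eq0 (z : C) : (normc2 z == 0) = (z == 0).
Proof.
case: z => a b; rewrite /normc2 -lock eq_complex /=.
apply/eqP/andP => [h | [/eqP -> /eqP ->]]; last by rewrite expr0n addr0.
by split; apply/eqP; nra.
Qed.

Lemma normc2J (z : C) : normc2 (conjc z) = normc2 z.
Proof. by apply: (@complexI R); rewrite -!mulcJ_normc2 conjcK mulrC. Qed.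

Lemma normc2_real (x : R) : normc2 x%:C = x ^+ 2.
Proof. by apply: (@complexI R); rewrite -mulcJ_normc2 conjc_real real_complexX. Qed.

End ComplexSquaredNorm.

Ltac normc2_ring :=
  apply: (@complexI _); rewrite ?real_complexE -?mulcJ_normc2 ?conjcE; ring.

Section Eigenvectors.
Variable F : fieldType.

Lemma eigenvector_mulmxC m n (A : 'M[F]_(m, n)) (B : 'M[F]_(n, m)) (x : 'rV_m) a :
  a != 0 -> x != 0 -> x *m (A *m B) = a *: x ->
  x *m A != 0 /\ x *m A *m (B *m A) = a *: (x *m A).
Proof.
move=> a_neq0 x_neq0 xAB; split.
  apply: contraNneq x_neq0 => xA0.
  have : a *: x == 0 by rewrite -xAB mulmxA xA0 mul0mx.
  by rewrite scalemx_eq0 (negbTE a_neq0).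
by rewrite !mulmxA -[x *m A *m B]mulmxA xAB scalemxAl.
Qed.

Lemma mxtrace_prod_XsubC n (M : 'M[F]_n.+1) (c : 'I_n.+1 -> F) :
  char_poly M = \prod_i ('X - (c i)%:P) -> \tr M = \sum_i c i.
Proof.
move=> cpM; apply: oppr_inj.
have prodE : \prod_i ('X - (c i)%:P) = \prod_(p <- map c (enum 'I_n.+1)) ('X - p%:P).
  by rewrite big_map big_enum.
have sumE : \sum_i c i = \sum_(p <- map c (enum 'I_n.+1)) p by rewrite big_map big_enum.
have := coefPn_prod_XsubC (ps := map c (enum 'I_n.+1)).
by rewrite size_map size_enum_ord -prodE -sumE -cpM char_poly_trace // => ->.
Qed.

End Eigenvectors.

Section GramMatrices.
Variable R : rcfType.
Local Notation C := R[i].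
Local Notation conjmx := (map_mx (@conjc R)).

Definition sqnorm m n (A : 'M[C]_(m, n)) : R := \sum_i \sum_j normc2 (A i j).

Definition gram_det n (V : 'M[C]_(n, 2)) : R :=
  (\sum_i normc2 (V i 0)) * (\sum_i normc2 (V i 1))
  - normc2 (\sum_i conjc (V i 0) * V i 1).

Lemma conjmxK m n (A : 'M[C]_(m, n)) : conjmx (conjmx A) = A.
Proof. by apply/matrixP => i j; rewrite !mxE conjcK. Qed.

Lemma conjmxM m n p (A : 'M[C]_(m, n)) (B : 'M[C]_(n, p)) :
  conjmx (A *m B) = conjmx A *m conjmx B.
Proof. exact: map_mxM. Qed.

Lemma sqnormE m n (A : 'M[C]_(m, n)) : (sqnorm A)%:C = \tr (A *m (conjmx A)^T).
Proof.
rewrite real_complex_sum; apply: eq_bigr => i _; rewrite mxE real_complex_sum.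
by apply: eq_bigr => j _; rewrite !mxE mulcJ_normc2.
Qed.

Lemma sqnorm_ge0 m n (A : 'M[C]_(m, n)) : 0 <= sqnorm A.
Proof. by apply: sumr_ge0 => i _; apply: sumr_ge0 => j _; apply: normc2_ge0. Qed.

Lemma sqnorm_gt0 m n (A : 'M[C]_(m, n)) : A != 0 -> 0 < sqnorm A.
Proof.
case/matrix0Pn => i [j nzAij].
have entry_ge0 k l : 0 <= normc2 (A k l) by apply: normc2_ge0.
apply: (@lt_le_trans _ _ (normc2 (A i j))); first by rewrite lt_def normc2_eq0 nzAij entry_ge0.
rewrite /sqnorm (bigD1 i) //= (bigD1 j) //= -addrA lerDl.
by rewrite addr_ge0 ?sumr_ge0 // => k _; rewrite sumr_ge0.
Qed.

Lemma sqnorm_conjmx m n (A : 'M[C]_(m, n)) : sqnorm (conjmx A) = sqnorm A.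
Proof. by apply: eq_bigr => i _; apply: eq_bigr => j _; rewrite mxE normc2J. Qed.

Lemma gram_detE n (V : 'M[C]_(n, 2)) (S := (conjmx V)^T *m V) :
  (gram_det V)%:C = S 0 0 * S 1 1 - S 0 1 * S 1 0.
Proof.
have SE i j : S i j = \sum_k conjc (V k i) * V k j.
  by rewrite !mxE; apply: eq_bigr => k _; rewrite !mxE.
have colE i : (\sum_k normc2 (V k i))%:C = \sum_k conjc (V k i) * V k i.
  by rewrite real_complex_sum; apply: eq_bigr => k _; rewrite -mulcJ_normc2 mulrC.
rewrite real_complexB real_complexM !colE -mulcJ_normc2 !SE conjc_sum.
by congr (_ - _ * _); apply: eq_bigr => k _; rewrite conjcM conjcK mulrC.
Qed.

Lemma mxtrace_gram_sqr n (V : 'M[C]_(n, 2)) :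
  \tr (V *m (conjmx V)^T *m (V *m (conjmx V)^T)) = (sqnorm V ^+ 2 - 2 * gram_det V)%:C.
Proof.
rewrite real_complexB real_complexX real_complexM real_complexn gram_detE sqnormE.
have -> : \tr (V *m (conjmx V)^T *m (V *m (conjmx V)^T)) =
           \tr ((conjmx V)^T *m V *m ((conjmx V)^T *m V)).
  by rewrite !mulmxA mxtrace_mulC !mulmxA.
rewrite [\tr (V *m _)]mxtrace_mulC.
move: (_ *m V) => S.
by rewrite /mxtrace !sum_ord2 !mxE !sum_ord2; ring.
Qed.

Lemma cauchy_schwarz4 (u v : 'rV[C]_(2 * 2)) :
  normc2 (\tr (u *m v^T)) <= sqnorm u * sqnorm v.
Proof.
rewrite /sqnorm /mxtrace !big_ord1 mxE !sum_ord4 !mxE.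
set u0 : C := u _ _; set u1 : C := u _ _; set u2 : C := u _ _; set u3 : C := u _ _.
set v0 : C := v _ _; set v1 : C := v _ _; set v2 : C := v _ _; set v3 : C := v _ _.
clearbody u0 u1 u2 u3 v0 v1 v2 v3.
rewrite -subr_ge0.
have -> : (normc2 u0 + normc2 u1 + normc2 u2 + normc2 u3)
          * (normc2 v0 + normc2 v1 + normc2 v2 + normc2 v3)
          - normc2 (u0 * v0 + u1 * v1 + u2 * v2 + u3 * v3) =
   normc2 (u0 * conjc v1 - u1 * conjc v0) + normc2 (u0 * conjc v2 - u2 * conjc v0)
   + normc2 (u0 * conjc v3 - u3 * conjc v0) + normc2 (u1 * conjc v2 - u2 * conjc v1)
   + normc2 (u1 * conjc v3 - u3 * conjc v1) + normc2 (u2 * conjc v3 - u3 * conjc v2).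
  by normc2_ring.
by rewrite !addr_ge0 ?normc2_ge0.
Qed.

(* With a(z) = |z V^T|^2 and z' = (- conj z_1, conj z_0), which is orthogonal
   to z: a(z) + a(z') = |z|^2 |V|^2 and a(z) a(z') - |z|^4 q = |<z V^T, z' V^T>|^2. *)
Lemma gram_form_bound (V : 'M[C]_(2 * 2, 2)) (z : 'rV[C]_2) :
  sqnorm z ^+ 2 * gram_det V <=
  sqnorm (z *m V^T) * (sqnorm z * sqnorm V - sqnorm (z *m V^T)).
Proof.
rewrite /gram_det /sqnorm !big_ord1 !sum_ord4 !mxE !sum_ord2 !mxE.
set a0 : C := V _ 0; set a1 : C := V _ 0; set a2 : C := V _ 0; set a3 : C := V _ 0.
set b0 : C := V _ 1; set b1 : C := V _ 1; set b2 : C := V _ 1; set b3 : C := V _ 1.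
set z0 : C := z _ 0; set z1 : C := z _ 1.
clearbody a0 a1 a2 a3 b0 b1 b2 b3 z0 z1.
set Q := normc2 (z0 * a0 + z1 * b0) + _ + _ + _.
set Q' := normc2 (- conjc z1 * a0 + conjc z0 * b0) + normc2 (- conjc z1 * a1 + conjc z0 * b1)
  + normc2 (- conjc z1 * a2 + conjc z0 * b2) + normc2 (- conjc z1 * a3 + conjc z0 * b3).
have -> : (normc2 z0 + normc2 z1) * (normc2 a0 + normc2 b0 + (normc2 a1 + normc2 b1)
    + (normc2 a2 + normc2 b2) + (normc2 a3 + normc2 b3)) - Q = Q'.
  by rewrite /Q /Q'; normc2_ring.
rewrite -subr_ge0.
have -> : Q * Q' - (normc2 z0 + normc2 z1) ^+ 2 *
   ((normc2 a0 + normc2 a1 + normc2 a2 + normc2 a3)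
    * (normc2 b0 + normc2 b1 + normc2 b2 + normc2 b3)
    - normc2 (conjc a0 * b0 + conjc a1 * b1 + conjc a2 * b2 + conjc a3 * b3)) =
  normc2 (conjc (z0 * a0 + z1 * b0) * (- conjc z1 * a0 + conjc z0 * b0)
    + conjc (z0 * a1 + z1 * b1) * (- conjc z1 * a1 + conjc z0 * b1)
    + conjc (z0 * a2 + z1 * b2) * (- conjc z1 * a2 + conjc z0 * b2)
    + conjc (z0 * a3 + z1 * b3) * (- conjc z1 * a3 + conjc z0 * b3)).
  by rewrite /Q /Q'; normc2_ring.
exact: normc2_ge0.
Qed.

End GramMatrices.

Section Pauli.
Variable R : rcfType.
Local Notation C := R[i].
Local Notation Y := (pauli R 1 *t pauli R 1).

(* [ring] cannot use the constructor term ['i = Complex 0 1]; it can use this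
   constant, provided simplification does not unfold it. *)
Definition iC : C := 'i.
Arguments iC : simpl never.

Lemma iC_sqr : iC * iC = -1.
Proof. by rewrite -expr2 sqr_i. Qed.

Lemma conjc_iC : conjc iC = - iC.
Proof. by apply/eqP; rewrite eq_complex /= oppr0 !eqxx. Qed.

Definition pauli_entry (k a b : nat) : C :=
  match k, a, b with
  | 0, 0, 1 | 0, 1, 0 | 2, 0, 0 => 1
  | 1, 0, 1 => - iC
  | 1, 1, 0 => iC
  | 2, 1, 1 => -1
  | _, _, _ => 0
  end.

Lemma pauliE k a b : pauli R k a b = pauli_entry k a b.
Proof.
by case: k => [[|[|[|k]]] hk] //; case: a => [[|[|a]] ha] //;
  case: b => [[|[|b]] hb] //; rewrite mxE /=.
Qed.

Lemma pauli_tensE k l (i j : 'I_(2 * 2)) : (pauli R k *t pauli R l) i j =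
  pauli_entry k (i %/ 2) (j %/ 2) * pauli_entry l (i %% 2) (j %% 2).
Proof. by rewrite mxE !pauliE. Qed.

Lemma corr_mxE (r : 'M[C]_(2 * 2)) k l : corr r k l = \sum_i \sum_j
  r i j * (pauli_entry k (j %/ 2) (i %/ 2) * pauli_entry l (j %% 2) (i %% 2)).
Proof. by apply: eq_bigr => i _; rewrite mxE; apply: eq_bigr => j _; rewrite pauli_tensE. Qed.

Lemma SsumE (r : 'M[C]_(2 * 2)) :
  Ssum r = 2 * \tr (r *m r) + 2 * \tr (r *m Y *m r^T *m Y) - \tr r ^+ 2.
Proof.
(* Abstracting [corr r] and [Y] keeps the sum expansions from unfolding them. *)
rewrite /Ssum; move: (corr r) (corr_mxE r) Y (pauli_tensE 1 1) => t tE Y YE.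
rewrite !sum_ord3 !tE /mxtrace !sum_ord4 !mxE !sum_ord4 !mxE !sum_ord4 !mxE !sum_ord4.
by rewrite !YE; simpl pauli_entry; ring: iC_sqr.
Qed.

Lemma trmx_spin_flip : Y^T = Y.
Proof.
apply/matrixP => i j; rewrite mxE !pauli_tensE.
by case: i => [[|[|[|[|i]]]] hi] //; case: j => [[|[|[|[|j]]]] hj] //;
  simpl pauli_entry; ring.
Qed.

Lemma conjmx_spin_flip : map_mx conjc Y = Y.
Proof.
apply/matrixP => i j; rewrite mxE !pauli_tensE conjcM.
by case: i => [[|[|[|[|i]]]] hi] //; case: j => [[|[|[|[|j]]]] hj] //;
  simpl pauli_entry; rewrite ?conjcN ?conjc0 ?conjc1 ?conjc_iC; ring.
Qed.

Lemma spin_flip_sqr : Y *m Y = 1.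
Proof.
apply/matrixP => i j; rewrite !mxE sum_ord4 !pauli_tensE.
by case: i => [[|[|[|[|i]]]] hi] //; case: j => [[|[|[|[|j]]]] hj] //;
  simpl pauli_entry; rewrite -val_eqE [X in _ = X]/=; ring: iC_sqr.
Qed.

End Pauli.

Section Arithmetic.
Variable R : realFieldType.

(* 4/9 < mu <= 2 q forces a (1 - a), b (1 - b) > 2/9, so a, b < 2/3 and
   a b < 4/9. *)
Lemma twice_lt_of_product_bound (mu q a b : R) : 4 / 9 < mu -> 0 <= a -> 0 <= b ->
  q <= a * (1 - a) -> q <= b * (1 - b) -> mu <= a * b -> 2 * q < mu.
Proof.
move=> mu_gt a_ge0 b_ge0 qa qb mu_ab; rewrite ltNge; apply/negP => mu_le.
have a_lt : a < 2 / 3 by nra.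
have b_lt : b < 2 / 3 by nra.
nra.
Qed.

Lemma twice_lt_of_scaled_bound (mu n A B q : R) : 4 / 9 < mu -> 0 < n ->
  0 <= A -> 0 <= B -> (mu * n) ^+ 2 * q <= A * (mu * n - A) ->
  n ^+ 2 * q <= B * (n - B) -> (mu * n) ^+ 2 <= A * B -> 2 * q < mu.
Proof.
move=> mu_gt n_gt0 A_ge0 B_ge0 qA qB AB.
have mu_gt0 : 0 < mu by lra.
have m_gt0 : 0 < mu * n by rewrite mulr_gt0.
have [mu_neq0 n_neq0] : mu != 0 /\ n != 0 by rewrite !gt_eqF.
apply: (@twice_lt_of_product_bound mu q (A / (mu * n)) (B / n) mu_gt).
- by rewrite divr_ge0 // ltW.
- by rewrite divr_ge0 // ltW.
- rewrite -(ler_pM2l (exprn_gt0 2 m_gt0)).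
  suff -> : (mu * n) ^+ 2 * (A / (mu * n) * (1 - A / (mu * n))) = A * (mu * n - A) by [].
  by field; rewrite mu_neq0 n_neq0.
- rewrite -(ler_pM2l (exprn_gt0 2 n_gt0)).
  suff -> : n ^+ 2 * (B / n * (1 - B / n)) = B * (n - B) by [].
  by field; rewrite n_neq0.
- rewrite -(ler_pM2l (mulr_gt0 m_gt0 n_gt0)).
  have -> : mu * n * n * mu = (mu * n) ^+ 2 by ring.
  suff -> : mu * n * n * (A / (mu * n) * (B / n)) = A * B by [].
  by field; rewrite mu_neq0 n_neq0.
Qed.

End Arithmetic.

Section SpinFlipSpectrum.
Variable R : rcfType.
Local Notation C := R[i].
Local Notation conjmx := (map_mx (@conjc R)).
Local Notation Y := (pauli R 1 *t pauli R 1).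

Lemma sqnorm_mulmx_spin_flip (w : 'rV[C]_(2 * 2)) : sqnorm (w *m Y) = sqnorm w.
Proof.
apply: (@complexI R); rewrite !sqnormE conjmxM conjmx_spin_flip trmx_mul.
by rewrite trmx_spin_flip -mulmxA [Y *m _]mulmxA spin_flip_sqr mul1mx.
Qed.

(* G is symmetric, so |y conj G|^2 = y conj G G y^+ = mu |y|^2, and the same
   eigen-equation evaluates u Y w^T for u = y conj G V^T and w = conj y V^T. *)
Lemma spin_flip_eigen_gt (V : 'M[C]_(2 * 2, 2)) (y : 'rV[C]_2) (mu : R) :
  let G := V^T *m Y *m V in
  sqnorm V = 1 -> y != 0 -> 4 / 9 < mu ->
  y *m (conjmx G *m G) = mu%:C *: y -> 2 * gram_det V < mu.
Proof.
move=> G normV y_neq0 mu_gt eig.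
have GT : G^T = G by rewrite /G !trmx_mul trmxK trmx_spin_flip mulmxA.
have form : \tr (y *m conjmx G *m V^T *m (conjmx y *m V^T *m Y)^T) = (mu * sqnorm y)%:C.
  rewrite !trmx_mul trmxK trmx_spin_flip real_complexM sqnormE.
  have -> : y *m conjmx G *m V^T *m (Y *m (V *m (conjmx y)^T)) =
            y *m (conjmx G *m G) *m (conjmx y)^T by rewrite /G !mulmxA.
  by rewrite eig -scalemxAl mxtraceZ.
clearbody G.
have yG_norm : sqnorm (y *m conjmx G) = mu * sqnorm y.
  apply: (@complexI R); rewrite real_complexM !sqnormE conjmxM conjmxK trmx_mul GT.
  by rewrite mulmxA -[y *m _ *m G]mulmxA eig -scalemxAl mxtraceZ.
have := cauchy_schwarz4 (y *m conjmx G *m V^T) (conjmx y *m V^T *m Y).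
rewrite form normc2_real sqnorm_mulmx_spin_flip => cs.
have qa := gram_form_bound V (y *m conjmx G).
have qb := gram_form_bound V (conjmx y).
rewrite yG_norm normV mulr1 in qa; rewrite sqnorm_conjmx normV mulr1 in qb.
exact: twice_lt_of_scaled_bound mu_gt (sqnorm_gt0 y_neq0) (sqnorm_ge0 _) (sqnorm_ge0 _) qa qb cs.
Qed.

End SpinFlipSpectrum.

Section Concurrence.
Variable R : rcfType.
Local Notation C := R[i].

Lemma concurrence_eigen (rho : 'M[C]_(2 * 2)) c :
  is_concurrence rho c -> 4 / 9 < c ^+ 2 ->
  exists mu S : R, [/\ 4 / 9 < mu, mu <= S, eigenvalue (wootters_mx rho) mu%:C
                     & \tr (wootters_mx rho) = S%:C].
Proof.
case=> lam [lam_ge0 [_ [cpW ->]]] c2.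
exists (lam 0 ^+ 2), (\sum_i lam i ^+ 2); split.
- set m := Num.max _ _ in c2.
  have m_ge0 : 0 <= m by rewrite le_max lexx.
  have m_le : m <= lam 0.
    rewrite ge_max lam_ge0 /=.
    by have := lam_ge0 1; have := lam_ge0 2; have := lam_ge0 3; lra.
  nra.
- by rewrite (bigD1 0) //= lerDl sumr_ge0 // => i _; apply: sqr_ge0.
- rewrite eigenvalue_root_char cpW.
  have -> : \prod_i ('X - ((lam i ^+ 2)%:C)%:P) =
            \prod_(p <- map (fun i => (lam i ^+ 2)%:C) (enum 'I_4)) ('X - p%:P).
    by rewrite big_map big_enum.
  by rewrite root_prod_XsubC; apply: map_f; rewrite mem_enum.
- by rewrite (mxtrace_prod_XsubC cpW) real_complex_sum.
Qed.

End Concurrence.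

Section ReducedStates.
Variable R : rcfType.
Local Notation C := R[i].
Local Notation conjmx := (map_mx (@conjc R)).
Local Notation Y := (pauli R 1 *t pauli R 1).

Definition amp_mx (psi : qstate3 R) (k : 'I_3) : 'M[C]_(2 * 2, 2) :=
  \matrix_(i, z) amp psi k z (mxtens_unindex i).1 (mxtens_unindex i).2.

Lemma reduced_amp_mx psi k :
  reduced psi k = amp_mx psi k *m (conjmx (amp_mx psi k))^T.
Proof. by apply/matrixP => i j; rewrite !mxE; apply: eq_bigr => z _; rewrite !mxE. Qed.

Lemma sqnorm_amp_mx psi k : normalized psi -> sqnorm (amp_mx psi k) = 1.
Proof.
move=> nrm; apply: (@complexI R); rewrite real_complex1 sqnormE -reduced_amp_mx -nrm.
rewrite /mxtrace sum_mxtens_index.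
under eq_bigr => a _ do under eq_bigr => b _ do rewrite mxE mxtens_indexK.
case: k => [[|[|[|k]]] hk] //; rewrite /amp /=.
- by under eq_bigr do rewrite exchange_big; rewrite exchange_big.
- by under eq_bigr do rewrite exchange_big.
Qed.

Lemma wootters_mx_gram (V : 'M[C]_(2 * 2, 2)) :
  wootters_mx (V *m (conjmx V)^T) = V *m ((conjmx V)^T *m Y *m conjmx V *m V^T *m Y).
Proof. by rewrite /wootters_mx; cbv zeta; rewrite conjmxM -map_trmx conjmxK !mulmxA. Qed.

Lemma spin_flip_gram_mul (V : 'M[C]_(2 * 2, 2)) :
  (conjmx V)^T *m Y *m conjmx V *m V^T *m Y *m V
  = conjmx (V^T *m Y *m V) *m (V^T *m Y *m V).
Proof. by rewrite !conjmxM conjmx_spin_flip map_trmx !mulmxA. Qed.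

Lemma Ssum_gram (V : 'M[C]_(2 * 2, 2)) : sqnorm V = 1 ->
  Ssum (V *m (conjmx V)^T)
  = (1 - 4 * gram_det V)%:C + 2 * \tr (wootters_mx (V *m (conjmx V)^T)).
Proof.
move=> normV; rewrite SsumE mxtrace_gram_sqr -sqnormE normV.
have -> : (V *m (conjmx V)^T)^T = conjmx (V *m (conjmx V)^T).
  by rewrite trmx_mul trmxK conjmxM -map_trmx conjmxK.
by rewrite /wootters_mx; cbv zeta; rewrite !real_complexE; ring.
Qed.

Lemma Ssum_reduced_gt1 (psi : qstate3 R) k : normalized psi ->
  (exists c : R, is_concurrence (reduced psi k) c /\ 4 / 9 < c ^+ 2) ->
  1 < Ssum (reduced psi k).
Proof.
move=> /(sqnorm_amp_mx k) normV [c [conc c2]].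
have [mu [S [mu_gt muS eigW trW]]] := concurrence_eigen conc c2.
rewrite reduced_amp_mx in eigW trW *; set V := amp_mx psi k in normV eigW trW *.
have mu_neq0 : mu%:C != 0 :> C.
  by rewrite -real_complex0 (inj_eq (@complexI R)) gt_eqF //; lra.
have /eigenvalueP [x xW x_neq0] := eigW.
rewrite wootters_mx_gram in xW.
have [y_neq0 yE] := eigenvector_mulmxC mu_neq0 x_neq0 xW.
rewrite spin_flip_gram_mul in yE.
have := spin_flip_eigen_gt normV y_neq0 mu_gt yE.
rewrite Ssum_gram // trW.
have -> : (1 - 4 * gram_det V)%:C + 2 * S%:C = (1 - 4 * gram_det V + 2 * S)%:C.
  by rewrite !real_complexE.
by rewrite -real_complex1 ltcR; lra.
Qed.

End ReducedStates.

(* Pairs {i,j} of qubits are identified with the traced-out qubit k;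
   two distinct pairs = two distinct k1 <> k2. *)
Theorem corollary5 (R : rcfType) (psi : qstate3 R) (k1 k2 : 'I_3) :
  normalized psi -> k1 <> k2 ->
  (exists c : R, is_concurrence (reduced psi k1) c /\ 4 / 9 < c ^+ 2) ->
  (exists c : R, is_concurrence (reduced psi k2) c /\ 4 / 9 < c ^+ 2) ->
  1 < Ssum (reduced psi k1) /\ 1 < Ssum (reduced psi k2).
Proof.
(* Each pair is handled on its own. *)
move=> normalized_psi _ conc1 conc2.
by split; [exact: Ssum_reduced_gt1 conc1 | exact: Ssum_reduced_gt1 conc2].
Qed.
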